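(* Let $\alpha\in[0,1)$, let $n\geq f(\alpha)$, and let $s$ be an integer with $2\leq s\leq\frac{n-2}{3}$. Then $\rho_{\alpha}\big(K_s\vee(K_{n-3s}\cup 2sK_1)\big)<\eta(n)$. (For $s=1$ one has $\rho_{\alpha}(K_1\vee(K_{n-3}\cup 2K_1))=\eta(n)$.)
   Context: For a graph $G$, $A_{\alpha}(G)=\alpha D(G)+(1-\alpha)A(G)$ where $D(G)$ is the diagonal degree matrix and $A(G)$ the adjacency matrix, and $\rho_{\alpha}(G)$ is the largest eigenvalue of $A_{\alpha}(G)$. $\vee$ denotes join, $\cup$ disjoint union, $K_m$ the complete graph on $m$ vertices, $tK_1$ the edgeless graph on $t$ vertices. Define $f(\alpha)=14$ if $\alpha\in[0,\frac12]$, $f(\alpha)=17$ if $\alpha\in(\frac12,\frac23]$, $f(\alpha)=20$ if $\alpha\in(\frac23,\frac34]$, and $f(\alpha)=\frac{5}{1-\alpha}+1$ if $\alpha\in(\frac34,1)$. $\eta(n)$ is the largest root of $x^{3}-((\alpha+1)n+\alpha-4)x^{2}+(\alpha n^{2}+(\alpha^{2}-2\alpha-1)n-2\alpha+1)x-\alpha^{2}n^{2}+(5\alpha^{2}-3\alpha+2)n-10\alpha^{2}+15\alpha-8=0$. *)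

From HB Require Import structures.
From mathcomp Require Import all_boot all_order all_algebra.
From mathcomp Require Import reals.
Set Implicit Arguments. Unset Strict Implicit. Unset Printing Implicit Defensive.
Import Order.TTheory GRing.Theory Num.Theory.
Local Open Scope ring_scope.

(* A simple graph on a finite vertex type T is a symmetric irreflexive
   relation; the constructions below always produce such relations. *)

Definition complete_graph (m : nat) : rel 'I_m := fun i j => i != j.

Definition edgeless_graph (t : nat) : rel 'I_t := fun _ _ => false.

Definition gunion (T1 T2 : finType) (e1 : rel T1) (e2 : rel T2) : rel (T1 + T2) :=
  fun x y => match x, y with
             | inl a, inl b => e1 a b
             | inr a, inr b => e2 a b
             | _, _ => false
             end.

Definition gjoin (T1 T2 : finType) (e1 : rel T1) (e2 : rel T2) : rel (T1 + T2) :=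
  fun x y => match x, y with
             | inl a, inl b => e1 a b
             | inr a, inr b => e2 a b
             | _, _ => true
             end.

Definition adjmx (R : nzRingType) (T : finType) (e : rel T) : 'M[R]_#|T| :=
  \matrix_(i, j) (e (enum_val i) (enum_val j))%:R.

Definition gdeg (T : finType) (e : rel T) (x : T) : nat := #|[set y | e x y]|.

Definition degmx (R : nzRingType) (T : finType) (e : rel T) : 'M[R]_#|T| :=
  \matrix_(i, j) ((i == j)%:R * (gdeg e (enum_val i))%:R).

Definition Aalpha (R : comNzRingType) (T : finType) (alpha : R) (e : rel T)
  : 'M[R]_#|T| := alpha *: degmx R e + (1 - alpha) *: adjmx R e.

Definition is_largest_eigenvalue (R : numFieldType) (N : nat) (M : 'M[R]_N) (r : R) :=
  eigenvalue M r /\ forall m : R, eigenvalue M m -> m <= r.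

Definition is_rho_alpha (R : numFieldType) (T : finType) (alpha : R) (e : rel T) (r : R) :=
  is_largest_eigenvalue (Aalpha alpha e) r.

Definition is_largest_root (R : numFieldType) (p : {poly R}) (x : R) :=
  root p x /\ forall y : R, root p y -> y <= x.

Definition f_thr (R : numFieldType) (alpha : R) : R :=
  if alpha <= 1/2 then 14
  else if alpha <= 2/3 then 17
  else if alpha <= 3/4 then 20
  else 5 / (1 - alpha) + 1.

Definition eta_poly (R : numFieldType) (alpha : R) (n : nat) : {poly R} :=
  let N := n%:R in
  'X^3
  - ((alpha + 1) * N + alpha - 4)%:P * 'X^2
  + (alpha * N ^+ 2 + (alpha ^+ 2 - 2 * alpha - 1) * N - 2 * alpha + 1)%:P * 'X
  + (- alpha ^+ 2 * N ^+ 2 + (5 * alpha ^+ 2 - 3 * alpha + 2) * N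
     - 10 * alpha ^+ 2 + 15 * alpha - 8)%:P.

Definition Gsn (s n : nat) :=
  gjoin (@complete_graph s) (gunion (@complete_graph (n - 3 * s)%N) (@edgeless_graph (2 * s)%N)).

From HB Require Import structures.
From mathcomp Require Import all_boot all_order all_algebra.
From mathcomp Require Import reals.
From mathcomp Require Import ring lra zify.
Set Implicit Arguments. Unset Strict Implicit. Unset Printing Implicit Defensive.
Import Order.TTheory GRing.Theory Num.Theory.
Local Open Scope ring_scope.

(* The vertices of K_s ∨ (K_(n-3s) ∪ 2sK_1) split into the equitable cells
   X = K_s, Y = K_(n-3s) and Z = 2sK_1.  Summing the eigen-equation of A_α over
   each cell shows that the cell sums of an eigenvector with eigenvalue m form
   an eigenvector of the 3×3 quotient matrix.  For m ≥ n - 3 the characteristic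
   polynomial of that matrix, written as a cubic in t = m - (n - 3), has positive
   coefficients as soon as n ≥ f(α); so the cell sums vanish, and then so does
   the eigenvector.  Hence ρ_α < n - 3, whereas η(n) > n - 3 because the cubic
   defining η(n) is negative at n - 3 and positive at n. *)

Lemma Aalpha_mxE (R : comNzRingType) (T : finType) (alpha : R) (e : rel T) i j :
  Aalpha alpha e i j = alpha * ((i == j)%:R * (gdeg e (enum_val i))%:R)
                       + (1 - alpha) * (e (enum_val i) (enum_val j))%:R.
Proof. by rewrite !mxE. Qed.

(* Eigenvalues are taken on row vectors, so the sum runs over the first index. *)
Lemma eigenvalue_Aalpha_vertex_eq (R : fieldType) (T : finType) (alpha m : R) (e : rel T) :
  eigenvalue (Aalpha alpha e) m ->
  exists2 w : T -> R, (exists x, w x != 0) &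
    forall y, alpha * (gdeg e y)%:R * w y + (1 - alpha) * \sum_x w x * (e x y)%:R = m * w y.
Proof.
case/eigenvalueP => v hv v_neq0.
exists (fun x => v 0 (enum_rank x)).
  apply/existsP; rewrite -negb_forall; apply: contra v_neq0 => /forallP v0.
  apply/eqP/rowP => j; rewrite !mxE.
  by have := v0 (enum_val j); rewrite enum_valK => /eqP.
move=> y; have := congr1 (fun M : 'rV[R]_#|T| => M 0 (enum_rank y)) hv; rewrite !mxE => <-.
rewrite (reindex (@enum_rank T)) /=; last first.
  by exists enum_val => x _; rewrite ?enum_rankK ?enum_valK.
under [RHS]eq_bigr => x _ do
  rewrite Aalpha_mxE !enum_rankK (inj_eq enum_rank_inj) mulrDr.
rewrite big_split /= [X in _ = X + _](bigD1 y) //= [X in _ = _ + X + _]big1 ?addr0; last first.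
  by move=> x /negbTE ->; rewrite mul0r mulr0 mulr0.
rewrite mulr_sumr eqxx mul1r.
congr (_ + _); first by rewrite mulrC.
by apply: eq_bigr => x _; rewrite mulrCA.
Qed.

Lemma natr_gdeg (R : nzSemiRingType) (T : finType) (e : rel T) x :
  (gdeg e x)%:R = \sum_y (e x y)%:R :> R.
Proof.
rewrite /gdeg -sum1_card natr_sum big_mkcond /=.
by apply: eq_bigr => y _; rewrite inE; case: (e x y).
Qed.

Lemma sumr_mul_neq (R : nzRingType) (I : finType) (u : I -> R) j :
  \sum_i u i * (i != j)%:R = \sum_i u i - u j.
Proof.
rewrite (bigD1 j) //= eqxx mulr0 add0r [X in _ = X - _](bigD1 j) //= addrC addrK.
by apply: eq_bigr => i ->; rewrite mulr1.
Qed.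

Notation Gsn_vertex s n := ('I_s + ('I_(n - 3 * s) + 'I_(2 * s)))%type.

Definition sumX (R : nzRingType) s n (u : Gsn_vertex s n -> R) := \sum_i u (inl i).
Definition sumY (R : nzRingType) s n (u : Gsn_vertex s n -> R) := \sum_j u (inr (inl j)).
Definition sumZ (R : nzRingType) s n (u : Gsn_vertex s n -> R) := \sum_k u (inr (inr k)).

Lemma Gsn_sym s n : symmetric (@Gsn s n).
Proof.
by case=> [i|[j|k]] [i'|[j'|k']] //=; rewrite /complete_graph eq_sym.
Qed.

Lemma sum_Gsn_col (R : nzRingType) s n (u : Gsn_vertex s n -> R) y :
  \sum_x u x * (@Gsn s n x y)%:R =
  match y with
  | inl i => sumX u - u (inl i) + sumY u + sumZ u
  | inr (inl j) => sumX u + sumY u - u (inr (inl j))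
  | inr (inr _) => sumX u
  end.
Proof.
rewrite !big_sumType /= /sumX /sumY /sumZ.
case: y => [i|[j|k]] /=; rewrite /complete_graph /edgeless_graph ?sumr_mul_neq;
  by rewrite -!big_distrl /= ?mulr1 ?mulr0 ?addr0 ?addrA.
Qed.

Lemma Gsn_deg (R : comNzRingType) s n (y : Gsn_vertex s n) :
  (gdeg (@Gsn s n) y)%:R =
  match y with
  | inl _ => 3 * s%:R + (n - 3 * s)%:R - 1
  | inr (inl _) => s%:R + (n - 3 * s)%:R - 1
  | inr (inr _) => s%:R
  end :> R.
Proof.
rewrite natr_gdeg.
under eq_bigr => x _ do rewrite Gsn_sym -[_%:R]mul1r.
rewrite (sum_Gsn_col (fun=> 1 : R)) /sumX /sumY /sumZ !sumr_const !card_ord natrM.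
by case: y => [i|[j|k]]; ring.
Qed.

Lemma Gsn_vertex_eqs (R : realFieldType) (alpha m : R) s n (w : Gsn_vertex s n -> R) :
  let b := 1 - alpha in let S := s%:R in let P := (n - 3 * s)%:R in
  (forall y, alpha * (gdeg (@Gsn s n) y)%:R * w y
             + b * \sum_x w x * (@Gsn s n x y)%:R = m * w y) ->
  [/\ forall i, (m - alpha * (3 * S + P - 1) + b) * w (inl i) = b * (sumX w + sumY w + sumZ w),
      forall j, (m - alpha * (S + P - 1) + b) * w (inr (inl j)) = b * (sumX w + sumY w)
    & forall k, (m - alpha * S) * w (inr (inr k)) = b * sumX w].
Proof.
move=> b S P Hw; split=> [i|j|k].
- by have := Hw (inl i); rewrite Gsn_deg sum_Gsn_col; lra.
- by have := Hw (inr (inl j)); rewrite Gsn_deg sum_Gsn_col; lra.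
- by have := Hw (inr (inr k)); rewrite Gsn_deg sum_Gsn_col; lra.
Qed.

Ltac nonneg := repeat (apply: mulr_ge0); lra.

(* det (m I - B) for the quotient matrix B of the cells X, Y, Z, with S = s and
   K = n - 3s - 2. *)
Definition quot_char (R : comNzRingType) (alpha S K m : R) : R :=
  let b := 1 - alpha in
  let cX := m - alpha * (3 * S + 1 + K) + b - S * b in
  let cY := m - alpha * (S + K + 1) + b - (K + 2) * b in
  let cZ := m - alpha * S in
  cX * cY * cZ - S * b ^+ 2 * ((K + 2) * cZ + 2 * S * cY).

Definition quot_char_c0 (R : comNzRingType) (b S K : R) : R :=
  4*S^+3*b^+2 + 8*S^+3*b + 4*S^+2*K*b^+2 + 8*S^+2*K*b - 12*S^+2*b - 8*S^+2
  + 2*S*K^+2*b - 2*S*K*b^+2 - 8*S*K*b - 4*S*K - 4*S*b^+2 - 2*S*b + 12*S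
  - 2*K^+2*b - 2*K*b + 4*K + 4*b - 4.

Definition quot_char_c1 (R : comNzRingType) (b S K : R) : R :=
  3*S^+2*b^+2 + 12*S^+2*b + 4*S^+2 + S*K*b^+2 + 7*S*K*b + 2*S*K + 2*S*b^+2
  - 5*S*b - 14*S + K^+2*b - K*b - 4*K - 6*b + 8.

Definition quot_char_c2 (R : comNzRingType) (b S K : R) : R :=
  4*S*b + 4*S + K*b + K + 2*b - 5.

Lemma quot_char_expand (R : comNzRingType) (alpha S K m : R) :
  let b := 1 - alpha in let t := m - (3 * S + K - 1) in
  quot_char alpha S K m =
  quot_char_c0 b S K + quot_char_c1 b S K * t + quot_char_c2 b S K * t ^+ 2 + t ^+ 3.
Proof. rewrite /quot_char /quot_char_c0 /quot_char_c1 /quot_char_c2 /=; ring. Qed.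

Lemma quot_char_c0_K0_gt0 (R : realFieldType) (b S : R) :
  0 < b -> b <= 1 -> 2 <= S -> 4 <= b * (3 * S + 1) -> 0 < quot_char_c0 b S 0.
Proof.
move=> hb0 hb1 hS h4.
have -> : quot_char_c0 b S 0 = 4*S^+3*b^+2 + 8*S^+3*b - 12*S^+2*b - 8*S^+2
    - 4*S*b^+2 - 2*S*b + 12*S + 4*b - 4 by rewrite /quot_char_c0; ring.
have h1 : 0 <= (S - 2) * (S * b) by nonneg.
have h2 : 0 <= (S - 2) * b by nonneg.
have h3 : 0 <= S * (b * (3 * S + 1) - 4) by nonneg.
have h5 : 0 <= (S * S) * (b * (3 * S + 1) - 4) by nonneg.
have h6 : 0 <= (S * S) * (b * (b * (3 * S + 1) - 4)) by nonneg.
nra.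
Qed.

Lemma quot_char_c0_K0_defect_gt0 (R : realFieldType) (b S : R) :
  0 < b -> b <= 1 -> 2 <= S -> b * (3 * S + 1) < 4 ->
  0 < b * quot_char_c0 b S 0
      + (4 * (S - 1) + b * (2 * S * (S - 2) + 2 * S * b * (2 * S - 1))) * (4 - b * (3 * S + 1)).
Proof.
move=> hb0 hb1 hS h4; set x := b * S.
have hx : 3 * x < 4 - b by rewrite /x; lra.
have hx0 : 0 < x by rewrite /x mulr_gt0 //; lra.
have -> : b * quot_char_c0 b S 0
    + (4 * (S - 1) + b * (2 * S * (S - 2) + 2 * S * b * (2 * S - 1))) * (4 - b * (3 * S + 1)) =
    -8*x^+3 + 2*b*x^+2 - 2*b^+2*x + 2*x^+2*S + 14*x^+2 - 6*b*x + 4*b^+2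
    - 12*x*S + 4*x + 16*S - 16.
  by rewrite /quot_char_c0 /x; ring.
have h1 : 0 <= (S - 2) * ((2 - x) * (4 - x)) by nonneg.
have h2 : 0 <= b * (x * x) by nonneg.
have h3 : 0 <= b * (4 - b - 3 * x) by nonneg.
have h4' : 0 <= x * (4 - b - 3 * x) by nonneg.
have h5 : 0 <= x * (x * (4 - b - 3 * x)) by nonneg.
have h6 : 0 <= b * (x * (4 - b - 3 * x)) by nonneg.
nra.
Qed.

Lemma quot_char_c0_gt0 (R : realFieldType) (b S K : R) :
  0 < b -> b <= 1 -> 2 <= S -> 0 <= K -> 4 <= b * (3 * S + 1 + K) ->
  0 < quot_char_c0 b S K.
Proof.
move=> hb0 hb1 hS hK h4.
(* c0 is quadratic in K.  If b (3S+1) < 4, the slope E pays for the deficit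
   4 - b (3S+1), using b (3S+1+K) >= 4. *)
set E := (4 * (S - 1) + b * (2 * S * (S - 2) + 2 * S * b * (2 * S - 1))).
have hE : 0 < E.
  have h1 : 0 <= S * (S - 2) by nonneg.
  have h2 : 0 <= S * b * (2 * S - 1) by nonneg.
  have : 0 <= b * (2 * S * (S - 2) + 2 * S * b * (2 * S - 1)) by apply: mulr_ge0; lra.
  rewrite /E; lra.
have hP : 0 <= (S - 1) * (K * (b * (3 * S + 1 + K) - 4)) by nonneg.
have -> : quot_char_c0 b S K =
    K * E + quot_char_c0 b S 0 + 2 * ((S - 1) * (K * (b * (3 * S + 1 + K) - 4))).
  by rewrite /quot_char_c0 /E; ring.
have hKE : 0 <= K * E by nonneg.
have [hw|hw] := lerP 4 (b * (3 * S + 1)).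
  by have := quot_char_c0_K0_gt0 hb0 hb1 hS hw; lra.
have hD : 0 < b * quot_char_c0 b S 0 + E * (4 - b * (3 * S + 1)).
  exact: quot_char_c0_K0_defect_gt0.
have hQ : 0 <= E * (b * (3 * S + 1 + K) - 4) by nonneg.
have : 0 < b * (K * E + quot_char_c0 b S 0).
  have -> : b * (K * E + quot_char_c0 b S 0) = E * (b * (3 * S + 1 + K) - 4)
      + (b * quot_char_c0 b S 0 + E * (4 - b * (3 * S + 1))) by ring.
  lra.
rewrite pmulr_rgt0 //; lra.
Qed.

Lemma quot_char_c1_gt0 (R : realFieldType) (b S K : R) :
  0 < b -> b <= 1 -> 2 <= S -> 0 <= K -> 12 <= 3 * S + K -> 4 <= b * (3 * S + 1 + K) ->
  0 < quot_char_c1 b S K.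
Proof.
move=> hb0 hb1 hS hK h12 h4; rewrite /quot_char_c1.
have h1 : 0 <= K * (b * (3 * S + 1 + K) - 4) by nonneg.
have h2 : 0 <= (S - 2) * (K * b) by nonneg.
have h3 : 0 <= (S - 2) * b by nonneg.
have h4' : 0 <= (S - 2) * (S * b) by nonneg.
have h5 : 0 <= S * (b * (K * b)) by nonneg.
have h6 : 0 <= b * (S * b) by nonneg.
have h9 : 0 <= S * (S * (b * b)) by nonneg.
have [hS4|hS4] := lerP 4 S.
  have h7 : 0 <= (S - 4) * (S - 2) by nonneg.
  have h8 : 0 <= (S - 2) * K by nonneg.
  nra.
have h7 : 0 <= S * (3 * S + K - 12) by nonneg.
have h8 : 0 <= (4 - S) * (S - 2) by nonneg.
nra.
Qed.

Lemma quot_char_gt0 (R : realFieldType) (alpha S K m : R) :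
  0 <= alpha < 1 -> 2 <= S -> 0 <= K -> 12 <= 3 * S + K ->
  4 <= (1 - alpha) * (3 * S + 1 + K) -> 3 * S + K - 1 <= m ->
  0 < quot_char alpha S K m.
Proof.
move=> /andP[ha0 ha1] hS hK h12 h4 hm; rewrite quot_char_expand /=.
set b := 1 - alpha; set t := m - _.
have hb0 : 0 < b by rewrite /b; lra.
have hb1 : b <= 1 by rewrite /b; lra.
have ht : 0 <= t by rewrite /t; lra.
have h0 := quot_char_c0_gt0 hb0 hb1 hS hK h4.
have h1 := quot_char_c1_gt0 hb0 hb1 hS hK h12 h4.
have h2 : 0 < quot_char_c2 b S K by rewrite /quot_char_c2; nra.
have : 0 <= t ^+ 3 by rewrite exprn_ge0.
have : 0 <= quot_char_c2 b S K * t ^+ 2 by rewrite mulr_ge0 ?exprn_ge0 //; lra.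
have : 0 <= quot_char_c1 b S K * t by rewrite mulr_ge0 //; lra.
lra.
Qed.

Lemma quot_system_trivial (R : realFieldType) (alpha S K m X Y Z : R) :
  0 <= alpha < 1 -> 2 <= S -> 0 <= K -> 12 <= 3 * S + K ->
  4 <= (1 - alpha) * (3 * S + 1 + K) -> 3 * S + K - 1 <= m ->
  (m - alpha * (3 * S + (K + 2) - 1) + (1 - alpha)) * X = S * ((1 - alpha) * (X + Y + Z)) ->
  (m - alpha * (S + (K + 2) - 1) + (1 - alpha)) * Y = (K + 2) * ((1 - alpha) * (X + Y)) ->
  (m - alpha * S) * Z = 2 * S * ((1 - alpha) * X) ->
  [/\ X = 0, Y = 0 & Z = 0].
Proof.
move=> ha hS hK h12 h4 hm eX eY eZ; case/andP: (ha) => ha0 ha1.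
pose b := 1 - alpha.
pose cY := m - alpha * (S + K + 1) + b - (K + 2) * b.
pose cZ := m - alpha * S.
have hcY : 0 < cY by rewrite /cY /b; nra.
have hcZ : 0 < cZ by rewrite /cZ; nra.
have X0 : X = 0.
  have : quot_char alpha S K m * X = 0.
    have -> : quot_char alpha S K m * X =
        cY * cZ * ((m - alpha * (3 * S + (K + 2) - 1) + b) * X - S * (b * (X + Y + Z)))
      + S * b * cZ * ((m - alpha * (S + (K + 2) - 1) + b) * Y - (K + 2) * (b * (X + Y)))
      + S * b * cY * ((m - alpha * S) * Z - 2 * S * (b * X)).
      by rewrite /quot_char /cY /cZ /b; ring.
    by rewrite eX eY eZ !subrr !mulr0 !addr0.
  by move/eqP; rewrite mulf_eq0 (gt_eqF (quot_char_gt0 ha hS hK h12 h4 hm)) => /eqP.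
split=> //.
  have : cY * Y = 0 by move: eY; rewrite X0 /cY /b; lra.
  by move/eqP; rewrite mulf_eq0 (gt_eqF hcY) => /eqP.
have : cZ * Z = 0 by move: eZ; rewrite X0 /cZ; lra.
by move/eqP; rewrite mulf_eq0 (gt_eqF hcZ) => /eqP.
Qed.

Lemma Gsn_eigenvalue_lt (R : realFieldType) (alpha m : R) s n :
  0 <= alpha < 1 -> (2 <= s)%N -> (3 * s <= n - 2)%N ->
  4 <= (1 - alpha) * (n%:R - 1) -> 14 <= n%:R :> R ->
  eigenvalue (Aalpha alpha (@Gsn s n)) m -> m < n%:R - 3.
Proof.
move=> ha hs2 hsn h4 h14 /eigenvalue_Aalpha_vertex_eq [w [x0 wx0] /Gsn_vertex_eqs].
case/andP: (ha) => ha0 ha1.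
set b := 1 - alpha; set S : R := s%:R; set K : R := (n - 3 * s - 2)%:R.
have hP : (n - 3 * s)%:R = K + 2 :> R by rewrite -[2]/(2%:R) -natrD; congr _%:R; lia.
have hn : n%:R = 3 * S + 2 + K :> R by rewrite -[3]/(3%:R) -[2]/(2%:R) -natrM -!natrD; congr _%:R; lia.
rewrite hP => -[eX eY eZ]; rewrite ltNge; apply/negP => hm.
have hS : 2 <= S by rewrite /S (ler_nat R 2 s).
have hK : 0 <= K by [].
rewrite hn in h4 h14 hm.
have cell_eq (I : finType) (c r : R) (v : I -> R) : (forall i, c * v i = r) ->
    c * \sum_i v i = #|I|%:R * r.
  by move=> ev; rewrite mulr_sumr (eq_bigr _ (fun i _ => ev i)) sumr_const mulr_natl.
have [X0 Y0 Z0] : [/\ sumX w = 0, sumY w = 0 & sumZ w = 0].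
  apply: (@quot_system_trivial R alpha S K m) => //; try lra.
  - by rewrite /sumX -/b (cell_eq _ _ _ _ eX) card_ord.
  - by rewrite /sumY -/b (cell_eq _ _ _ _ eY) card_ord hP.
  - by rewrite /sumZ -/b (cell_eq _ _ _ _ eZ) card_ord natrM.
have [cX cY cZ] : [/\ 0 < m - alpha * (3 * S + (K + 2) - 1) + b,
    0 < m - alpha * (S + (K + 2) - 1) + b & 0 < m - alpha * S].
  by rewrite /b in h4 *; split; nra.
move: wx0; case: x0 => [i|[j|k]].
- by have := eX i; rewrite X0 Y0 Z0 !addr0 mulr0 => /eqP; rewrite mulf_eq0 (gt_eqF cX) /= => ->.
- by have := eY j; rewrite X0 Y0 !addr0 mulr0 => /eqP; rewrite mulf_eq0 (gt_eqF cY) /= => ->.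
- by have := eZ k; rewrite X0 mulr0 => /eqP; rewrite mulf_eq0 (gt_eqF cZ) /= => ->.
Qed.

Lemma f_thr_bound (R : realFieldType) (alpha N : R) :
  0 <= alpha < 1 -> f_thr alpha <= N -> 14 <= N /\ 4 <= (1 - alpha) * (N - 1).
Proof.
case/andP=> ha0 ha1; rewrite /f_thr.
case: ifP => h1 hN; first by split; nra.
case: ifP hN => h2 hN; first by split; nra.
case: ifP hN => h3 hN; first by split; nra.
have h34 : 3 / 4 < alpha by rewrite ltNge h3.
have hb : 0 < 1 - alpha by lra.
have : 5 <= (N - 1) * (1 - alpha) by rewrite -ler_pdivrMr //; lra.
by move=> h5; split; nra.
Qed.

Lemma horner_eta_poly (R : numFieldType) (alpha x : R) n :
  (eta_poly alpha n).[x] = x ^+ 3 - ((alpha + 1) * n%:R + alpha - 4) * x ^+ 2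
  + (alpha * n%:R ^+ 2 + (alpha ^+ 2 - 2 * alpha - 1) * n%:R - 2 * alpha + 1) * x
  + (- alpha ^+ 2 * n%:R ^+ 2 + (5 * alpha ^+ 2 - 3 * alpha + 2) * n%:R
     - 10 * alpha ^+ 2 + 15 * alpha - 8).
Proof. rewrite /eta_poly !hornerE; ring. Qed.

Lemma eta_poly_at_sub3 (R : numFieldType) (alpha : R) n :
  (eta_poly alpha n).[n%:R - 3] = - (2 * (1 - alpha) * (alpha * (n%:R - 5) + 1)).
Proof. rewrite horner_eta_poly; ring. Qed.

Lemma eta_poly_at (R : numFieldType) (alpha : R) n :
  (eta_poly alpha n).[n%:R] = 3 * (1 - alpha) * n%:R ^+ 2
    + (5 * alpha ^+ 2 - 5 * alpha + 3) * n%:R - 10 * alpha ^+ 2 + 15 * alpha - 8.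
Proof. rewrite horner_eta_poly; ring. Qed.

Lemma largest_root_gt (R : rcfType) (p : {poly R}) (a c x : R) :
  a <= c -> p.[a] < 0 -> 0 <= p.[c] -> is_largest_root p x -> a < x.
Proof.
move=> hac pa pc [_ x_max].
have [y /andP[hay _] py] := poly_ivt hac (introT andP (conj (ltW pa) pc)).
have ya : y != a by apply: contraTneq py => ->; rewrite /root (lt_eqF pa).
by apply: (lt_le_trans _ (x_max y py)); rewrite lt_neqAle eq_sym ya.
Qed.

Lemma eta_gt_sub3 (R : rcfType) (alpha eta : R) n :
  0 <= alpha < 1 -> 14 <= n%:R :> R -> is_largest_root (eta_poly alpha n) eta ->
  n%:R - 3 < eta.
Proof.
case/andP=> ha0 ha1 hn; apply: (@largest_root_gt _ _ _ n%:R); first lra.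
  have h5 : 0 <= alpha * (n%:R - 5) by apply: mulr_ge0; lra.
  by rewrite eta_poly_at_sub3 oppr_lt0 !mulr_gt0 //; lra.
have h1 : 0 <= (1 - alpha) * n%:R ^+ 2 by apply: mulr_ge0; rewrite ?sqr_ge0; lra.
have h2 : 0 <= (alpha - 1 / 2) ^+ 2 * n%:R by apply: mulr_ge0; rewrite ?sqr_ge0; lra.
have h3 : 0 <= alpha * (3 - 2 * alpha) by apply: mulr_ge0; lra.
by rewrite eta_poly_at; nra.
Qed.

Theorem mainTheorem4 (R : realType) (alpha : R) (n s : nat) :
  0 <= alpha -> alpha < 1 ->
  f_thr alpha <= n%:R ->
  (2 <= s)%N -> (3 * s <= n - 2)%N ->
  forall rho eta : R,
    is_rho_alpha alpha (@Gsn s n) rho ->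
    is_largest_root (eta_poly alpha n) eta ->
    rho < eta.
Proof.
move=> ha0 ha1 hf hs hsn rho eta [rho_eig _] eta_root.
have ha : 0 <= alpha < 1 by apply/andP.
have [hn h4] := f_thr_bound ha hf.
have := Gsn_eigenvalue_lt ha hs hsn h4 hn rho_eig.
have := eta_gt_sub3 ha hn eta_root.
lra.
Qed.
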